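(* Let $n$ be odd and consider $n$ particles on $\mathbb{M}^2$ lying on one geodesic (the real axis), with masses $m_1>0$, $m_2=m_3=1$, $m_4=m_5>0$, $\dots$, $m_{n-1}=m_n>0$ and initial positions $z_1=0$, $z_{2k}=-z_{2k+1}$ real for $k=1,\dots,(n-1)/2$, with $0<z_2<z_4<\dots<z_{n-1}$. Then there do not exist relative equilibria if any of the following holds: (1) all $n$ particles are inside the geodesic circle $|z|=1$ (i.e. $z_{n-1}<1$); (2) all particles except bodies $1,2,3$ are outside the geodesic circle while bodies $2,3$ are inside (i.e. $z_2<1<z_4$), and $z_{n-1}<1/z_2$; (3) all particles except bodies $n-1$ and $n$ are inside the geodesic circle (i.e. $z_{n-3}<1<z_{n-1}$), and $z_{n-1}<1/z_{n-3}$.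
   Context: $\mathbb{M}^2$ is the complex plane with metric $ds^2=\frac{4\,dz\,d\bar z}{(1+|z|^2)^2}$; the distance satisfies $\cos d(z_k,z_j)=\frac{2(z_k\bar z_j+z_j\bar z_k)+(|z_k|^2-1)(|z_j|^2-1)}{(|z_k|^2+1)(|z_j|^2+1)}$. The curved $n$-body problem has kinetic energy $T=\frac12\sum_i m_i\frac{4|\dot z_i|^2}{(1+|z_i|^2)^2}$ and force function $U=\sum_{i<j}m_im_j\cot d(z_i,z_j)$. A relative equilibrium is a solution invariant under a one-parameter subgroup of isometries; it suffices to consider solutions $w(t)=e^{it}z$. Following earlier work, positions $z_1,\dots,z_n$ ($r_l=|z_l|$) form a relative equilibrium iff for each $i$: $\frac{(1-r_i^2)z_i}{4(1+r_i^2)^4}=-\sum_{j\ne i}\frac{m_j(r_j^2+1)^2(1+z_i\bar z_j)(z_j-z_i)}{T_{ij}^{3/2}}$, with $T_{ij}=(r_i^2+1)^2(r_j^2+1)^2-[2(z_i\bar z_j+z_j\bar z_i)+(r_i^2-1)(r_j^2-1)]^2$. Singular configurations are excluded. *)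

From Stdlib Require Import Reals Lra.
From Coquelicot Require Import Coquelicot.
Open Scope R_scope.

Definition r2 (z : C) : R := (Cmod z) ^ 2.

(* T_ij = (r_i^2+1)^2 (r_j^2+1)^2 - [2(z_i conj z_j + z_j conj z_i) + (r_i^2-1)(r_j^2-1)]^2 ;
   note z_i conj z_j + z_j conj z_i = 2 Re(z_i conj z_j) is real. *)
Definition Tij (zi zj : C) : R :=
  (r2 zi + 1) ^ 2 * (r2 zj + 1) ^ 2
  - (2 * Re (zi * Cconj zj + zj * Cconj zi)%C + (r2 zi - 1) * (r2 zj - 1)) ^ 2.

Definition T32 (t : R) : R := t * sqrt t.

(* Bodies are indexed 1..n; masses m : nat -> R, positions z : nat -> C. *)

(* Singular configurations: collisions or antipodal pairs, i.e. T_ij = 0 for some i <> j. *)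
Definition nonsingular (n : nat) (z : nat -> C) : Prop :=
  forall i j, (1 <= i <= n)%nat -> (1 <= j <= n)%nat -> i <> j -> Tij (z i) (z j) <> 0.

Definition RE_term (n : nat) (m : nat -> R) (z : nat -> C) (i j : nat) : C :=
  if (andb (Nat.leb 1 j) (Nat.leb j n) && negb (Nat.eqb j i))%bool then
    ((RtoC (m j * (r2 (z j) + 1) ^ 2) * (1 + z i * Cconj (z j)) * (z j - z i))
      / RtoC (T32 (Tij (z i) (z j))))%C
  else RtoC 0.

Definition RE_eq (n : nat) (m : nat -> R) (z : nat -> C) (i : nat) : Prop :=
  (RtoC (1 - r2 (z i)) * z i / RtoC (4 * (1 + r2 (z i)) ^ 4))%C
  = (- sum_n (RE_term n m z i) n)%C.

Definition relative_equilibrium (n : nat) (m : nat -> R) (z : nat -> C) : Prop :=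
  nonsingular n z /\ forall i, (1 <= i <= n)%nat -> RE_eq n m z i.

(* Take the real part of the equation of a body 2K on the positive axis inside the
   unit circle: the outermost body in case (1), body 2 in case (2), body n-2 in
   case (3).  For bodies at c and y on the real axis the summand is an inward pull
   M (1+y^2)^2 sgn(s) / (8 s^2) with s = (1 + c y)(c - y).  The choice of K makes
   every symmetric pair at ±y pull body 2K inward in total, while the unit mass at
   -z_2 alone pulls harder than the rotation term (1-c^2) c / (4 (1+c^2)^4) < 1/(32 c^2)
   can balance. *)

From Stdlib Require Import Reals Lra Lia Psatz.
From Coquelicot Require Import Coquelicot.
Open Scope R_scope.

Definition sep (c y : R) : R := (1 + c * y) * (c - y).

(* For c > 0, positive values pull the body at c towards the origin. *)
Definition inward_pull (M c y : R) : R :=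
  M * (1 + y ^ 2) ^ 2 * sep c y / (8 * sep c y ^ 2 * Rabs (sep c y)).

Lemma r2_RtoC (y : R) : r2 (RtoC y) = y ^ 2.
Proof. unfold r2. rewrite Cmod_R. apply pow2_abs. Qed.

Lemma Cconj_RtoC (y : R) : Cconj (RtoC y) = RtoC y.
Proof. unfold Cconj, RtoC. simpl. rewrite Ropp_0. reflexivity. Qed.

Lemma Tij_RtoC (c y : R) : Tij (RtoC c) (RtoC y) = 4 * sep c y ^ 2.
Proof.
  unfold Tij, sep. rewrite !r2_RtoC, !Cconj_RtoC, <- !RtoC_mult, <- RtoC_plus, re_RtoC.
  ring.
Qed.

Lemma T32_Tij_RtoC (c y : R) :
  T32 (Tij (RtoC c) (RtoC y)) = 8 * sep c y ^ 2 * Rabs (sep c y).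
Proof.
  rewrite Tij_RtoC. unfold T32.
  replace (4 * sep c y ^ 2) with (Rsqr (2 * sep c y)) by (unfold Rsqr; ring).
  rewrite sqrt_Rsqr_abs, Rabs_mult, (Rabs_pos_eq 2) by lra. unfold Rsqr. ring.
Qed.

Lemma Re_RE_term_axis n m z i j c y :
  (1 <= j <= n)%nat -> j <> i -> z i = RtoC c -> z j = RtoC y -> sep c y <> 0 ->
  Re (RE_term n m z i j) = - inward_pull (m j) c y.
Proof.
  intros Hj Hji Hi Hy Hsep. unfold RE_term. rewrite Hi, Hy.
  replace (Nat.leb 1 j && Nat.leb j n && negb (Nat.eqb j i))%bool with true.
  2:{ symmetry. rewrite !Bool.andb_true_iff, Bool.negb_true_iff, !Nat.leb_le, Nat.eqb_neq. lia. }
  assert (HT : T32 (Tij (RtoC c) (RtoC y)) <> 0).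
  { rewrite T32_Tij_RtoC. apply Rmult_integral_contrapositive; split.
    - apply Rmult_integral_contrapositive; split; [lra | now apply pow_nonzero].
    - now apply Rabs_no_R0. }
  rewrite Cconj_RtoC, r2_RtoC, <- RtoC_mult, <- RtoC_plus, <- RtoC_minus, <- !RtoC_mult,
    <- RtoC_div, re_RtoC by exact HT.
  unfold inward_pull. rewrite <- T32_Tij_RtoC. unfold sep. field. exact HT.
Qed.

Lemma Re_RE_term_self n m z i : Re (RE_term n m z i i) = 0.
Proof. unfold RE_term. rewrite Nat.eqb_refl, Bool.andb_false_r. reflexivity. Qed.

Lemma Re_RE_term_0 n m z i : Re (RE_term n m z i 0) = 0.
Proof. reflexivity. Qed.

Lemma inward_pull_sep_pos M c y : 0 < sep c y ->
  inward_pull M c y = M * (1 + y ^ 2) ^ 2 / (8 * sep c y ^ 2).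
Proof. intros H. unfold inward_pull. rewrite Rabs_pos_eq by lra. field. lra. Qed.

Lemma inward_pull_sep_neg M c y : sep c y < 0 ->
  inward_pull M c y = - (M * (1 + y ^ 2) ^ 2 / (8 * sep c y ^ 2)).
Proof. intros H. unfold inward_pull. rewrite Rabs_left by lra. field. lra. Qed.

Lemma inward_pull_nonneg M c y : 0 <= M -> 0 < sep c y -> 0 <= inward_pull M c y.
Proof.
  intros HM H. rewrite inward_pull_sep_pos by exact H.
  apply Rdiv_le_0_compat; [apply Rmult_le_pos; [exact HM | apply pow_le; nra] | nra].
Qed.

Definition rotation_term (c : R) : R := (1 - c ^ 2) * c / (4 * (1 + c ^ 2) ^ 4).

Lemma rotation_term_lt c : 0 < c < 1 -> rotation_term c < / (32 * c ^ 2).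
Proof.
  intros Hc. unfold rotation_term.
  assert (Hc2 : 0 < c ^ 2) by nra.
  assert (Hq : 0 < (1 + c ^ 2) ^ 4) by (apply pow_lt; nra).
  assert (Hamgm : 8 * c ^ 3 <= 4 * c ^ 2 + 4 * c ^ 4).
  { pose proof (pow2_ge_0 (2 * c * (1 - c))). nra. }
  assert (Hbin : 1 + 4 * c ^ 2 + 6 * c ^ 4 <= (1 + c ^ 2) ^ 4).
  { pose proof (pow2_ge_0 (c ^ 2)). pose proof (pow2_ge_0 (c ^ 3)). pose proof (pow2_ge_0 (c ^ 4)). nra. }
  apply (Rmult_lt_reg_r (4 * (1 + c ^ 2) ^ 4 * (32 * c ^ 2))); [nra|].
  replace ((1 - c ^ 2) * c / (4 * (1 + c ^ 2) ^ 4) * (4 * (1 + c ^ 2) ^ 4 * (32 * c ^ 2)))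
    with (32 * c ^ 3 * (1 - c ^ 2)) by (field; lra).
  replace (/ (32 * c ^ 2) * (4 * (1 + c ^ 2) ^ 4 * (32 * c ^ 2))) with (4 * (1 + c ^ 2) ^ 4)
    by (field; lra).
  nra.
Qed.

(* On (c, 1) the pair at ±y would pull c outward; at y = 1/c the body at -y is
   antipodal to c. *)
Definition pair_pulls_inward (c y : R) : Prop := y < c \/ (1 <= y /\ c * y < 1).

Lemma pair_pulls_inward_sep c y : 0 < c < 1 -> 0 < y -> pair_pulls_inward c y ->
  sep c y <> 0 /\ 0 < sep c (- y).
Proof.
  unfold sep. intros Hc Hy Hpair. split.
  - destruct Hpair as [H | [H1 H2]].
    + assert (0 < (1 + c * y) * (c - y)) by (apply Rmult_lt_0_compat; nra). lra.
    + assert (0 < (1 + c * y) * (y - c)) by (apply Rmult_lt_0_compat; nra). lra.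
  - assert (c * y < 1) by (destruct Hpair; nra).
    apply Rmult_lt_0_compat; nra.
Qed.

Lemma pair_inward_pull_nonneg M c y : 0 <= M -> 0 < c < 1 -> 0 < y ->
  pair_pulls_inward c y -> 0 <= inward_pull M c y + inward_pull M c (- y).
Proof.
  intros HM Hc Hy Hpair.
  destruct (pair_pulls_inward_sep c y Hc Hy Hpair) as [_ Hopp].
  destruct Hpair as [Hlt | [H1 H2]].
  - assert (0 < sep c y) by (unfold sep; apply Rmult_lt_0_compat; nra).
    pose proof (inward_pull_nonneg M c y HM ltac:(lra)).
    pose proof (inward_pull_nonneg M c (- y) HM Hopp). lra.
  - assert (Hneg : sep c y < 0).
    { assert (0 < (1 + c * y) * (y - c)) by (apply Rmult_lt_0_compat; nra). unfold sep. lra. }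
    (* |sep c y| - sep c (-y) = 2 c (y^2 - 1) *)
    assert (Hfar : sep c (- y) <= - sep c y).
    { assert (0 <= 2 * c * (y ^ 2 - 1)) by (apply Rmult_le_pos; nra). unfold sep. nra. }
    rewrite inward_pull_sep_neg, inward_pull_sep_pos by assumption.
    replace ((- y) ^ 2) with (y ^ 2) by ring.
    assert (HN : 0 <= M * (1 + y ^ 2) ^ 2) by (apply Rmult_le_pos; [exact HM | apply pow_le; nra]).
    assert (M * (1 + y ^ 2) ^ 2 / (8 * sep c y ^ 2) <= M * (1 + y ^ 2) ^ 2 / (8 * sep c (- y) ^ 2)).
    { apply Rmult_le_compat_l; [exact HN |]. apply Rinv_le_contravar; nra. }
    lra.
Qed.

Lemma rotation_term_lt_inward_pull c b : 0 < b <= c -> c < 1 ->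
  rotation_term c < inward_pull 1 c (- b).
Proof.
  intros Hb Hc.
  assert (Hs : 0 < sep c (- b) <= 2 * c) by (unfold sep; split; nra).
  rewrite inward_pull_sep_pos by lra.
  apply Rlt_le_trans with (/ (32 * c ^ 2)); [apply rotation_term_lt; lra |].
  rewrite Rmult_1_l. unfold Rdiv.
  replace (/ (32 * c ^ 2)) with (1 * / (8 * (2 * c) ^ 2)) by (field; lra).
  apply Rmult_le_compat; [lra | apply Rlt_le, Rinv_0_lt_compat; nra | nra |].
  apply Rinv_le_contravar; nra.
Qed.

Lemma Re_sum_n (f : nat -> C) (N : nat) : Re (sum_n f N) = sum_f_R0 (fun j => Re (f j)) N.
Proof.
  induction N as [|N IH]; [now rewrite sum_O |].
  rewrite sum_Sn. simpl. now rewrite <- IH.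
Qed.

Lemma sum_f_R0_pairs (w : nat -> R) (q : nat) :
  sum_f_R0 w (2 * q + 1) = sum_f_R0 (fun k => w (2 * k)%nat + w (2 * k + 1)%nat) q.
Proof.
  induction q as [|q IH]; [simpl; ring |].
  replace (2 * S q + 1)%nat with (S (S (2 * q + 1))) by lia.
  rewrite !tech5, IH.
  replace (S (2 * q + 1)) with (2 * S q)%nat by lia.
  replace (S (2 * S q)) with (2 * S q + 1)%nat by lia. ring.
Qed.

Lemma sum_f_R0_le_term (f : nat -> R) (N i : nat) :
  (forall k, (k <= N)%nat -> f k <= 0) -> (i <= N)%nat -> sum_f_R0 f N <= f i.
Proof.
  intros Hf Hi. induction N as [|N IH] in i, Hf, Hi |- *.
  - replace i with 0%nat by lia. simpl. lra.
  - simpl. pose proof (Hf (S N) (le_n _)).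
    assert (IH' : forall j, (j <= N)%nat -> sum_f_R0 f N <= f j) by (intros; apply IH; auto).
    destruct (Nat.eq_dec i (S N)) as [-> | Hne].
    + pose proof (IH' 0%nat ltac:(lia)). pose proof (Hf 0%nat ltac:(lia)). lra.
    + pose proof (IH' i ltac:(lia)). lra.
Qed.

Section SymmetricAxisConfiguration.

Variables (p : nat) (m : nat -> R) (z : nat -> C) (x : nat -> R).

Hypothesis z_center : z 1%nat = RtoC 0.
Hypothesis z_pair : forall k, (1 <= k <= p)%nat ->
  z (2 * k)%nat = RtoC (x k) /\ z (2 * k + 1)%nat = RtoC (- x k).
Hypothesis m_center : 0 <= m 1%nat.
Hypothesis m_pair : forall k, (1 <= k <= p)%nat ->
  m (2 * k + 1)%nat = m (2 * k)%nat /\ 0 <= m (2 * k)%nat.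
Hypothesis x_pos : forall k, (1 <= k <= p)%nat -> 0 < x k.

Variable K : nat.
Hypothesis K_range : (1 <= K <= p)%nat.
Hypothesis x_K_inside : x K < 1.
Hypothesis pairs_pull_inward : forall k, (1 <= k <= p)%nat -> k <> K -> pair_pulls_inward (x K) (x k).

Let w (j : nat) : R := Re (RE_term (2 * p + 1) m z (2 * K) j).

Lemma Re_RE_eq_axis : RE_eq (2 * p + 1) m z (2 * K) ->
  rotation_term (x K) = - sum_f_R0 (fun k => w (2 * k)%nat + w (2 * k + 1)%nat) p.
Proof.
  unfold RE_eq. intros E. apply (f_equal Re) in E.
  destruct (z_pair K K_range) as [HzK _]. rewrite HzK in E.
  assert (Hden : 4 * (1 + x K ^ 2) ^ 4 <> 0) by (apply Rgt_not_eq; apply Rmult_lt_0_compat; [lra | apply pow_lt; nra]).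
  rewrite r2_RtoC, <- RtoC_mult, <- RtoC_div, re_RtoC in E by exact Hden.
  change (Re (- ?s)%C) with (- Re s) in E.
  rewrite Re_sum_n, sum_f_R0_pairs in E. exact E.
Qed.

Lemma x_K_range : 0 < x K < 1.
Proof. split; [exact (x_pos K K_range) | exact x_K_inside]. Qed.

Lemma pair_terms_nonpos k : (k <= p)%nat -> w (2 * k)%nat + w (2 * k + 1)%nat <= 0.
Proof.
  intros Hk. pose proof x_K_range as Hc.
  destruct (z_pair K K_range) as [HzK _]. unfold w.
  destruct (Nat.eq_dec k 0) as [-> | Hk0].
  - change (2 * 0)%nat with 0%nat. change (0 + 1)%nat with 1%nat.
    assert (Hsep : 0 < sep (x K) 0) by (unfold sep; lra).
    rewrite Re_RE_term_0, (Re_RE_term_axis _ _ _ _ _ (x K) 0) by (lia || lra || assumption).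
    pose proof (inward_pull_nonneg _ _ _ m_center Hsep). lra.
  - destruct (z_pair k ltac:(lia)) as [Hz_even Hz_odd].
    destruct (m_pair k ltac:(lia)) as [Hm_odd Hm_even].
    destruct (Nat.eq_dec k K) as [-> | HkK].
    + assert (Hsep : 0 < sep (x K) (- x K)).
      { unfold sep. apply Rmult_lt_0_compat; [| lra]. assert (x K * x K < 1) by nra. lra. }
      rewrite Re_RE_term_self, (Re_RE_term_axis _ _ _ _ _ (x K) (- x K)) by (lia || lra || assumption).
      pose proof (inward_pull_nonneg _ _ _ Hm_even Hsep). rewrite Hm_odd. lra.
    + pose proof (pairs_pull_inward k ltac:(lia) HkK) as Hpair.
      pose proof (x_pos k ltac:(lia)) as Hxk.
      destruct (pair_pulls_inward_sep _ _ Hc Hxk Hpair) as [Hsep Hsep_opp].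
      rewrite (Re_RE_term_axis _ _ _ _ _ (x K) (x k)), (Re_RE_term_axis _ _ _ _ _ (x K) (- x k))
        by (lia || lra || assumption).
      pose proof (pair_inward_pull_nonneg _ _ _ Hm_even Hc Hxk Hpair). rewrite Hm_odd. lra.
Qed.

Hypothesis m_3 : m 3%nat = 1.
Hypothesis x_1_le : x 1%nat <= x K.

Lemma first_pair_terms_lt : w 2%nat + w 3%nat < - rotation_term (x K).
Proof.
  pose proof x_K_range as Hc.
  destruct (z_pair K K_range) as [HzK _].
  destruct (z_pair 1 ltac:(lia)) as [Hz2 Hz3].
  pose proof (x_pos 1 ltac:(lia)) as Hx1.
  assert (Hw3 : w 3%nat < - rotation_term (x K)).
  { assert (Hsep : 0 < sep (x K) (- x 1%nat)) by (unfold sep; apply Rmult_lt_0_compat; nra).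
    unfold w. rewrite (Re_RE_term_axis _ _ _ _ _ (x K) (- x 1%nat)), m_3 by (lia || lra || assumption).
    pose proof (rotation_term_lt_inward_pull (x K) (x 1%nat) ltac:(lra) ltac:(lra)). lra. }
  assert (Hw2 : w 2%nat <= 0).
  { unfold w. destruct (Nat.eq_dec K 1) as [-> | HK1]; [rewrite Re_RE_term_self; lra |].
    destruct (pairs_pull_inward 1 ltac:(lia) ltac:(lia)) as [Hlt | [H1 _]]; [| lra].
    assert (Hsep : 0 < sep (x K) (x 1%nat)) by (unfold sep; apply Rmult_lt_0_compat; nra).
    destruct (m_pair 1 ltac:(lia)) as [_ Hm2]. change (2 * 1)%nat with 2%nat in Hm2.
    rewrite (Re_RE_term_axis _ _ _ _ _ (x K) (x 1%nat)) by (lia || lra || assumption).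
    pose proof (inward_pull_nonneg _ _ _ Hm2 Hsep). lra. }
  lra.
Qed.

Lemma no_RE_eq_axis : ~ RE_eq (2 * p + 1) m z (2 * K).
Proof.
  intros E. apply Re_RE_eq_axis in E.
  pose proof (sum_f_R0_le_term _ p 1 pair_terms_nonpos ltac:(lia)).
  pose proof first_pair_terms_lt.
  simpl in *. lra.
Qed.

End SymmetricAxisConfiguration.

Lemma RtoC_Re (w : C) : Im w = 0 -> w = RtoC (Re w).
Proof. destruct w as [a b]. simpl. intros ->. reflexivity. Qed.

Lemma increasing_on_le (x : nat -> R) (p : nat) :
  (forall k, (1 <= k < p)%nat -> x k < x (S k)) ->
  forall j k, (1 <= j <= k)%nat -> (k <= p)%nat -> x j <= x k.
Proof.
  intros Hinc j k Hjk Hk. induction k as [|k IH]; [lia |].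
  destruct (Nat.eq_dec j (S k)) as [-> | Hne]; [lra |].
  pose proof (IH ltac:(lia) ltac:(lia)). pose proof (Hinc k ltac:(lia)). lra.
Qed.

Lemma exists_inward_pulled_index (p : nat) (x : nat -> R) :
  (1 <= p)%nat -> 0 < x 1%nat ->
  (forall k, (1 <= k < p)%nat -> x k < x (S k)) ->
  x p < 1
  \/ ((2 <= p)%nat /\ x 1%nat < 1 < x 2%nat /\ x p < / x 1%nat)
  \/ ((2 <= p)%nat /\ x (p - 1)%nat < 1 < x p /\ x p < / x (p - 1)%nat) ->
  exists K, (1 <= K <= p)%nat /\ x K < 1 /\ x 1%nat <= x K /\
    forall k, (1 <= k <= p)%nat -> k <> K -> pair_pulls_inward (x K) (x k).
Proof.
  intros Hp Hx1 Hinc Hcases.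
  pose proof (increasing_on_le x p Hinc) as Hle.
  assert (Hlt : forall j k, (1 <= j < k)%nat -> (k <= p)%nat -> x j < x k).
  { intros j k Hjk Hk. pose proof (Hle j (k - 1)%nat ltac:(lia) ltac:(lia)).
    pose proof (Hinc (k - 1)%nat ltac:(lia)). replace (S (k - 1)) with k in * by lia. lra. }
  assert (Hprod : forall c k, 0 < c -> (k <= p)%nat -> (1 <= k)%nat -> x p < / c -> c * x k < 1).
  { intros c k Hc Hk1 Hk Hxp. pose proof (Hle k p ltac:(lia) ltac:(lia)).
    apply Rmult_lt_compat_l with (r := c) in Hxp; [| exact Hc].
    rewrite Rinv_r in Hxp by lra. nra. }
  destruct Hcases as [Hin | [(Hp2 & [H1 H2] & Hxp) | (Hp2 & [Hpen Hlast] & Hxp)]].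
  - exists p. repeat split; [lia | lia | exact Hin | apply Hle; lia |].
    intros k Hk Hkp. left. apply Hlt; lia.
  - exists 1%nat. repeat split; [lia | lia | exact H1 | lra |].
    intros k Hk Hk1. right. split.
    + pose proof (Hle 2%nat k ltac:(lia) ltac:(lia)). lra.
    + apply Hprod; lia || lra.
  - assert (0 < x (p - 1)%nat) by (pose proof (Hle 1%nat (p - 1)%nat ltac:(lia) ltac:(lia)); lra).
    exists (p - 1)%nat. repeat split; [lia | lia | exact Hpen | apply Hle; lia |].
    intros k Hk Hkp. destruct (Nat.eq_dec k p) as [-> | Hne].
    + right. split; [lra | apply Hprod; lia || lra].
    + left. apply Hlt; lia.
Qed.

Theorem proposition2 (p : nat) (m : nat -> R) (z : nat -> C) :
  (1 <= p)%nat ->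
  m 1%nat > 0 ->
  m 2%nat = 1 -> m 3%nat = 1 ->
  (forall k, (2 <= k <= p)%nat -> m (2 * k)%nat = m (2 * k + 1)%nat /\ m (2 * k)%nat > 0) ->
  z 1%nat = RtoC 0 ->
  (forall k, (1 <= k <= p)%nat ->
     Im (z (2 * k)%nat) = 0 /\ z (2 * k + 1)%nat = (- z (2 * k)%nat)%C) ->
  0 < Re (z 2%nat) ->
  (forall k, (1 <= k < p)%nat -> Re (z (2 * k)%nat) < Re (z (2 * k + 2)%nat)) ->
  ( (* (1) all particles inside the circle |z| = 1 *)
    Re (z (2 * p)%nat) < 1
    \/
    (* (2) bodies 2,3 inside, bodies 4..n outside, z_{n-1} < 1/z_2 *)
    ((2 <= p)%nat /\ Re (z 2%nat) < 1 < Re (z 4%nat)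
       /\ Re (z (2 * p)%nat) < / Re (z 2%nat))
    \/
    (* (3) only bodies n-1, n outside, z_{n-1} < 1/z_{n-3} *)
    ((2 <= p)%nat /\ Re (z (2 * p - 2)%nat) < 1 < Re (z (2 * p)%nat)
       /\ Re (z (2 * p)%nat) < / Re (z (2 * p - 2)%nat)) ) ->
  ~ relative_equilibrium (2 * p + 1) m z.
Proof.
  intros Hp Hm1 Hm2 Hm3 Hm Hz1 Hz Hx1 Hinc Hcases [_ HRE].
  set (x k := Re (z (2 * k)%nat)).
  assert (Hinc' : forall k, (1 <= k < p)%nat -> x k < x (S k)).
  { intros k Hk. unfold x. replace (2 * S k)%nat with (2 * k + 2)%nat by lia. auto. }
  replace (2 * p - 2)%nat with (2 * (p - 1))%nat in Hcases by lia.
  destruct (exists_inward_pulled_index p x Hp Hx1 Hinc' Hcases) as (K & HK & HxK & Hx1K & Hpull).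
  assert (Hz' : forall k, (1 <= k <= p)%nat ->
    z (2 * k)%nat = RtoC (x k) /\ z (2 * k + 1)%nat = RtoC (- x k)).
  { intros k Hk. destruct (Hz k Hk) as [Him ->]. rewrite (RtoC_Re _ Him), RtoC_opp. now split. }
  assert (Hm' : forall k, (1 <= k <= p)%nat -> m (2 * k + 1)%nat = m (2 * k)%nat /\ 0 <= m (2 * k)%nat).
  { intros k Hk. destruct (Nat.eq_dec k 1) as [-> | Hk1]; [simpl; lra |].
    destruct (Hm k ltac:(lia)). split; lra. }
  assert (Hpos : forall k, (1 <= k <= p)%nat -> 0 < x k).
  { intros k Hk. pose proof (increasing_on_le x p Hinc' 1 k ltac:(lia) ltac:(lia)). unfold x in *. simpl in *. lra. }
  exact (no_RE_eq_axis p m z x Hz1 Hz' ltac:(lra) Hm' Hpos K HK HxK Hpull Hm3 Hx1K (HRE (2 * K)%nat ltac:(lia))).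
Qed.
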